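(* Let $n\ge1$, $\mathbb{P}\in\mathcal{P}_n$, $\gamma\in S_{inv}$ and $\pi\in S_n$. Then $R_n(\mathbb{P})=R_n({}^{\gamma}\mathbb{P}\pi)$.
   Context: Scheduling on two machines with $n$ tasks. A processing-time matrix is $T\in\mathbb{R}_{++}^{2\times n}$; an allocation is $X\in\{0,1\}^{2\times n}$ with $X_{1j}+X_{2j}=1$; makespan $M(X,T)=\max_{i\in\{1,2\}}\sum_jX_{ij}T_{ij}$; $M^*(T)=\min_XM(X,T)$. $\mathcal{P}_n$ is the set of Borel probability measures on $\mathbb{R}^n$ supported in $\mathbb{R}_{++}^n$. For $\mathbb{P}\in\mathcal{P}_n$, algorithm $\mathcal{A}^{\mathbb{P}}$ draws $\mathbf{z}\sim\mathbb{P}$ and sends task $j$ to machine 1 iff $T_{1j}/T_{2j}<z_j$ (else to machine 2); $M(\mathbb{P},T)$ is its expected makespan, $R_n(\mathbb{P},T)=M(\mathbb{P},T)/M^*(T)$, $R_n(\mathbb{P})=\sup_TR_n(\mathbb{P},T)\in[1,\infty]$. $S_n$ is the symmetric group on $[n]$; for $\mathbf{z}\in\mathbb{R}^n$ and $\pi\in S_n$, $\mathbf{z}\pi$ is the vector obtained by permuting the entries of $\mathbf{z}$ by $\pi$. $S_{inv}=\{id,inv\}$ acts on $\mathbb{R}_{++}^n$ by ${}^{id}\mathbf{x}=\mathbf{x}$ and ${}^{inv}\mathbf{x}=(1/x_1,\dots,1/x_n)$. For $\mathbb{P}\in\mathcal{P}_n$, ${}^{\gamma}\mathbb{P}\pi\in\mathcal{P}_n$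 denotes the distribution of ${}^{\gamma}\mathbf{z}\pi$ where $\mathbf{z}\sim\mathbb{P}$. *)

From mathcomp Require Import all_boot all_order all_algebra all_fingroup.
From mathcomp Require Import all_classical all_reals all_analysis.
Import Order.TTheory GRing.Theory Num.Theory.
Set Implicit Arguments. Unset Strict Implicit. Unset Printing Implicit Defensive.
Local Open Scope ring_scope.
Local Open Scope classical_set_scope.

Section Scheduling.
Variables (R : realType) (n : nat).

(* processing-time matrices T in R^{2 x n}; row ord0 = machine 1, row 1 = machine 2 *)
Definition pos_mat (T : 'M[R]_(2, n)) : Prop := forall i j, 0 < T i j.

(* an allocation X in {0,1}^{2xn} with X_1j + X_2j = 1 is encoded by the
   machine index assigned to each task *)
Definition alloc := {ffun 'I_n -> 'I_2}.

Definition makespan (X : alloc) (T : 'M[R]_(2, n)) : R :=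
  \big[Num.max/0]_(i < 2) \sum_(j < n | X j == i) T i j.

Definition opt_makespan (T : 'M[R]_(2, n)) : R :=
  \big[Num.min/makespan [ffun=> ord0] T]_(X : alloc) makespan X T.

Definition alg_alloc (z : n.-tuple R) (T : 'M[R]_(2, n)) : alloc :=
  [ffun j => if T ord0 j / T 1 j < tnth z j then ord0 else 1].

Definition exp_makespan (P : set (n.-tuple R) -> \bar R) (T : 'M[R]_(2, n))
  : \bar R := (\int[P]_z (makespan (alg_alloc z T) T)%:E)%E.

Definition ratio (P : set (n.-tuple R) -> \bar R) (T : 'M[R]_(2, n)) : \bar R :=
  (exp_makespan P T * ((opt_makespan T)^-1)%:E)%E.

Definition worst_ratio (P : set (n.-tuple R) -> \bar R) : \bar R :=
  ereal_sup [set ratio P T | T in pos_mat].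

Definition supported_pos (P : set (n.-tuple R) -> \bar R) : Prop :=
  P [set z | forall j, 0 < tnth z j] = 1%E.

Definition perm_act (z : n.-tuple R) (pi : 'S_n) : n.-tuple R :=
  [tuple tnth z (pi j) | j < n].

Inductive Sinv := Sid | Sinv_inv.

Definition sinv_act (g : Sinv) (z : n.-tuple R) : n.-tuple R :=
  match g with
  | Sid => z
  | Sinv_inv => [tuple (tnth z j)^-1 | j < n]
  end.

(* Q is the distribution of ^g z pi where z ~ P *)
Definition is_transform_dist (P Q : set (n.-tuple R) -> \bar R)
  (g : Sinv) (pi : 'S_n) : Prop :=
  forall A : set (n.-tuple R), measurable A ->
    Q A = P ((fun z => perm_act (sinv_act g z) pi) @^-1` A).

End Scheduling.

(* Permuting the thresholds is undone by permuting the columns of T, which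
   changes neither the optimal makespan nor the makespan of the algorithm, so
   the set of ratios is unchanged.  Inverting the thresholds amounts to
   swapping the two machines: on U, A^{inv P} makes the same allocation as A^P
   on the row-swapped matrix, except when z_j = U_2j / U_1j exactly, an event
   that may have positive probability.  Scaling the second row of U by c < 1
   before the swap moves these ties into the zone c r_j < z_j < r_j (where
   r_j = U_2j / U_1j), whose probability tends to 0 as c -> 1, while the
   makespans lose at most a factor c and the optimum does not grow.  Hence
   every ratio of inv P is a limit of lower bounds for ratios of P, and since
   inversion is an involution the two worst-case ratios coincide. *)

From Pilot Require Import Defs.
From mathcomp Require Import all_boot all_order all_algebra all_fingroup.
From mathcomp Require Import all_classical all_reals all_analysis.
From mathcomp Require Import measurable_realfun.
Import Order.TTheory GRing.Theory Num.Theory numFieldNormedType.Exports.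
Set Implicit Arguments. Unset Strict Implicit. Unset Printing Implicit Defensive.
Local Open Scope ring_scope.
Local Open Scope classical_set_scope.

Section Makespan.
Variables (R : realType) (n : nat).
Implicit Types (T : 'M[R]_(2, n)) (X : alloc n).

Definition load X T (i : 'I_2) : R := \sum_(j < n | X j == i) T i j.

Lemma makespan_ge0 X T : 0 <= makespan X T.
Proof. by rewrite /makespan; elim/big_rec: _ => // i x _ x0; rewrite le_max x0 orbT. Qed.

Lemma le_load_makespan X T i : load X T i <= makespan X T.
Proof. exact: le_bigmax. Qed.

Lemma makespan_le X T (b : R) :
  0 <= b -> (forall i, load X T i <= b) -> makespan X T <= b.
Proof. by move=> b0 hb; rewrite /makespan; apply/bigmax_leP; split=> // i _; exact: hb. Qed.

Lemma makespan_row_perm (s : 'S_2) X T :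
  makespan [ffun j => (s^-1)%g (X j)] (row_perm s T) = makespan X T.
Proof.
rewrite /makespan [RHS](reindex_inj (@perm_inj _ s)); apply: eq_bigr => i _.
by apply: eq_big => j; rewrite ?mxE // ffunE -(inj_eq (@perm_inj _ s)) permKV.
Qed.

Lemma makespan_col_perm (s : 'S_n) X T :
  makespan [ffun j => X (s j)] (col_perm s T) = makespan X T.
Proof.
rewrite /makespan; apply: eq_bigr => i _.
by rewrite [RHS](reindex_inj (@perm_inj _ s)); apply: eq_big => j; rewrite ?mxE ?ffunE.
Qed.

Lemma le_makespan X T T' :
  (forall i j, T i j <= T' i j) -> makespan X T <= makespan X T'.
Proof. by move=> le_TT'; apply: le_bigmax2 => i _; apply: ler_sum => j _. Qed.

Lemma makespanZ (c : R) X T : 0 <= c -> makespan X (c *: T) = c * makespan X T.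
Proof.
move=> c0; rewrite /makespan; elim/big_rec2: _ => [|i x y _ ->]; first by rewrite mulr0.
by rewrite maxr_pMr // mulr_sumr; congr Num.max; apply: eq_bigr => j _; rewrite mxE.
Qed.

Lemma makespan_le_sum X T :
  (forall i j, 0 <= T i j) -> makespan X T <= \sum_i \sum_j T i j.
Proof.
move=> T0; have S0 : 0 <= \sum_i \sum_j T i j by do 2![apply: sumr_ge0 => ? _].
apply: makespan_le => // i; apply: le_trans (_ : \sum_j T i j <= _).
  by rewrite [leRHS](bigID (fun j => X j == i)) lerDl sumr_ge0.
by rewrite (bigD1 i) //= lerDl sumr_ge0 // => k _; exact: sumr_ge0.
Qed.

Lemma makespan_gt0 X T : (0 < n)%N -> pos_mat T -> 0 < makespan X T.
Proof.
move=> n_gt0 T0; pose j0 := Ordinal n_gt0.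
apply: lt_le_trans (le_load_makespan X T (X j0)).
rewrite /load (bigD1 j0) //= ltr_pwDl // sumr_ge0 // => j _; exact: ltW.
Qed.

Lemma opt_makespan_le X T : opt_makespan T <= makespan X T.
Proof. exact: bigmin_le. Qed.

Lemma opt_makespan_gt0 T : (0 < n)%N -> pos_mat T -> 0 < opt_makespan T.
Proof. by move=> n_gt0 T0; apply/bigmin_gtP; split=> [|X _]; exact: makespan_gt0. Qed.

Lemma le_opt_makespan_of T T' :
  (forall X, exists Y, makespan Y T' <= makespan X T) ->
  opt_makespan T' <= opt_makespan T.
Proof.
move=> h; apply/bigmin_geP; split=> [|X _]; last first.
  by have [Y /(le_trans (opt_makespan_le Y T'))] := h X.
by have [Y /(le_trans (opt_makespan_le Y T'))] := h [ffun=> ord0].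
Qed.

Lemma le_opt_makespan T T' :
  (forall i j, T i j <= T' i j) -> opt_makespan T <= opt_makespan T'.
Proof. by move=> le_TT'; apply: le_opt_makespan_of => X; exists X; exact: le_makespan. Qed.

Lemma opt_makespan_row_perm (s : 'S_2) T : opt_makespan (row_perm s T) = opt_makespan T.
Proof.
apply/le_anti/andP; split; apply: le_opt_makespan_of => X.
  by exists [ffun j => (s^-1)%g (X j)]; rewrite makespan_row_perm.
exists [ffun j => s (X j)]; rewrite -(makespan_row_perm s).
by under eq_ffun do rewrite ffunE permK; rewrite ffunK.
Qed.

Lemma opt_makespan_col_perm (s : 'S_n) T : opt_makespan (col_perm s T) = opt_makespan T.
Proof.
apply/le_anti/andP; split; apply: le_opt_makespan_of => X.
  by exists [ffun j => X (s j)]; rewrite makespan_col_perm.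
exists [ffun j => X ((s^-1)%g j)]; rewrite -(makespan_col_perm s).
by under eq_ffun do rewrite ffunE permK; rewrite ffunK.
Qed.

End Makespan.

Lemma measurable_inv (R : realType) : measurable_fun [set: R] GRing.inv.
Proof.
have -> : [set: R] = [set 0] `|` [set x | x != 0].
  by apply/seteqP; split=> // x _; case: (eqVneq x 0); [left|right].
apply/measurable_funU; [by []|apply: open_measurable; exact: open_neq|split].
  exact: measurable_fun_set1.
apply: open_continuous_measurable_fun; first exact: open_neq.
by move=> x; rewrite inE => x0; exact: inv_continuous.
Qed.

Lemma ge0_integral_image_measure d d' (T : measurableType d) (T' : measurableType d')
    (R : realType) (P : {measure set T -> \bar R}) (Q : {measure set T' -> \bar R})
    (f : T -> T') (h : T' -> \bar R) :
  measurable_fun [set: T] f -> (forall A, measurable A -> Q A = P (f @^-1` A)) ->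
  measurable_fun [set: T'] h -> (forall y, (0 <= h y)%E) ->
  (\int[Q]_y h y = \int[P]_x h (f x))%E.
Proof.
move=> mf QE mh h0; rewrite (eq_measure_integral (pushforward P f)) => [|A mA _].
  by rewrite ge0_integral_pushforward.
exact: QE.
Qed.

Lemma measurable_bigmaxr d (T : measurableType d) (R : realType) (D : set T)
    (I : Type) (s : seq I) (c : R) (f : I -> T -> R) :
  (forall i, measurable_fun D (f i)) ->
  measurable_fun D (fun x => \big[Num.max/c]_(i <- s) f i x).
Proof.
move=> mf; elim: s => [|i s ih].
  by rewrite (_ : (fun x => _) = cst c) //; apply: funext => x; rewrite big_nil.
rewrite (_ : (fun x => _) = f i \max (fun x => \big[Num.max/c]_(j <- s) f j x)).
  exact: measurable_maxr.
by apply: funext => x; rewrite big_cons.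
Qed.

Section Measurability.
Variables (R : realType) (n : nat).

Lemma measurable_sinv_act g : measurable_fun [set: n.-tuple R] (sinv_act g).
Proof.
case: g => /=; first exact: measurable_id.
apply/measurable_fun_tnthP => j.
rewrite (_ : _ \o _ = fun z => (tnth z j)^-1).
  by apply: measurableT_comp; [exact: measurable_inv | exact: measurable_tnth].
by apply: funext => z /=; rewrite tnth_mktuple.
Qed.

Lemma measurable_perm_act (pi : 'S_n) :
  measurable_fun [set: n.-tuple R] (fun z => perm_act z pi).
Proof.
apply/measurable_fun_tnthP => j; rewrite (_ : _ \o _ = fun z => tnth z (pi j)).
  exact: measurable_tnth.
by apply: funext => z /=; rewrite tnth_mktuple.
Qed.

Lemma measurable_makespan_alg (T : 'M[R]_(2, n)) :
  measurable_fun [set: n.-tuple R] (fun z => makespan (alg_alloc z T) T).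
Proof.
apply: measurable_bigmaxr => i; rewrite (_ : (fun z => _) = fun z => \sum_(j < n)
    if T ord0 j / T 1 j < tnth z j then (ord0 == i)%:R * T i j else (1 == i)%:R * T i j).
  apply: measurable_sum => j; apply: measurable_fun_ifT => //.
  by apply: measurable_fun_ltr => //; exact: measurable_tnth.
apply: funext => z; rewrite big_mkcond; apply: eq_bigr => j _.
by rewrite ffunE; case: (_ < _); case: (_ == i); rewrite /= ?(mul1r, mul0r).
Qed.

End Measurability.

Section Transform.
Variables (R : realType) (n : nat).
Implicit Types (T : 'M[R]_(2, n)) (z : n.-tuple R) (pi s : 'S_n).

Lemma perm_actM z s t : perm_act (perm_act z s) t = perm_act z (t * s).
Proof. by apply: eq_from_tnth => j; rewrite !tnth_mktuple permM. Qed.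

Lemma perm_act1 z : perm_act z 1 = z.
Proof. by apply: eq_from_tnth => j; rewrite tnth_mktuple perm1. Qed.

Lemma sinv_act_perm g z s : sinv_act g (perm_act z s) = perm_act (sinv_act g z) s.
Proof. by case: g => //; apply: eq_from_tnth => j; rewrite !tnth_mktuple. Qed.

Lemma sinv_actK g : involutive (@sinv_act R n g).
Proof. by case: g => // z; apply: eq_from_tnth => j; rewrite !tnth_mktuple invrK. Qed.

Lemma transformK g pi z :
  perm_act (sinv_act g (perm_act (sinv_act g z) pi)) pi^-1 = z.
Proof. by rewrite sinv_act_perm sinv_actK perm_actM mulVg perm_act1. Qed.

Lemma measurable_transform g pi :
  measurable_fun [set: n.-tuple R] (fun z => perm_act (sinv_act g z) pi).
Proof. exact: measurableT_comp (measurable_perm_act pi) (measurable_sinv_act g). Qed.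

Lemma is_transform_dist_sym (P Q : probability (n.-tuple R) R) g pi :
  is_transform_dist P Q g pi -> is_transform_dist Q P g pi^-1.
Proof.
move=> hQ A mA; rewrite hQ; last first.
  by rewrite -[_ @^-1` _]setTI; exact: measurable_transform.
by rewrite -comp_preimage (_ : _ \o _ = id) //; apply: funext => z; exact: transformK.
Qed.

Lemma measurable_pos_tuples : measurable [set z : n.-tuple R | forall j, 0 < tnth z j].
Proof.
rewrite (_ : [set z | _] = \bigcap_(j in [set: 'I_n]) [set z | 0 < tnth z j]).
  apply: fin_bigcap_measurable => // j _.
  rewrite -[[set z | _]]setTI; apply: measurable_fun_ltr => //; exact: measurable_tnth.
by apply/seteqP; split=> z /= z_pos j; [move=> _|]; exact: z_pos.
Qed.

Lemma sinv_act_gt0 g z j : (0 < tnth (sinv_act g z) j) = (0 < tnth z j).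
Proof. by case: g => //=; rewrite tnth_mktuple invr_gt0. Qed.

Lemma supported_pos_transform (P Q : probability (n.-tuple R) R) g pi :
  supported_pos P -> is_transform_dist P Q g pi -> supported_pos Q.
Proof.
rewrite /supported_pos => P_pos hQ; rewrite hQ; last exact: measurable_pos_tuples.
rewrite (_ : _ @^-1` _ = [set z | forall j, 0 < tnth z j]) //.
apply/seteqP; split=> z /= z_pos j.
  by have := z_pos ((pi^-1)%g j); rewrite tnth_mktuple permKV sinv_act_gt0.
by rewrite tnth_mktuple sinv_act_gt0; exact: z_pos.
Qed.

Lemma alg_alloc_col_perm s z T :
  alg_alloc (perm_act z s) (col_perm s T) = [ffun j => alg_alloc z T (s j)].
Proof. by apply/ffunP => j; rewrite !ffunE tnth_mktuple !mxE. Qed.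

Definition sinv_ratio (P : set (n.-tuple R) -> \bar R) (g : Sinv) T : \bar R :=
  (\int[P]_z (makespan (alg_alloc (sinv_act g z) T) T)%:E
     * ((opt_makespan T)^-1)%:E)%E.

Lemma ratio_transform (P Q : probability (n.-tuple R) R) g pi T :
  is_transform_dist P Q g pi -> Defs.ratio Q (col_perm pi T) = sinv_ratio P g T.
Proof.
move=> hQ; rewrite /Defs.ratio /exp_makespan opt_makespan_col_perm.
rewrite (ge0_integral_image_measure (measurable_transform g pi) hQ); last 2 first.
- apply/measurable_EFinP; exact: measurable_makespan_alg.
- by move=> z; rewrite lee_fin makespan_ge0.
by under eq_integral do rewrite alg_alloc_col_perm makespan_col_perm.
Qed.

Lemma worst_ratio_transform (P Q : probability (n.-tuple R) R) g pi :
  is_transform_dist P Q g pi ->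
  worst_ratio Q = ereal_sup [set sinv_ratio P g T | T in @pos_mat R n].
Proof.
move=> hQ; congr ereal_sup; apply/seteqP; split=> _ [T T_pos <-].
  exists (col_perm pi^-1 T); first by move=> i j; rewrite mxE.
  by rewrite -(ratio_transform _ hQ) -col_permM mulgV col_perm1.
by exists (col_perm pi T); [move=> i j; rewrite mxE | exact: ratio_transform].
Qed.

End Transform.

Section BoundedIntegral.
Context d (T : measurableType d) (R : realType).
Implicit Types (F G : T -> R).

Lemma bounded_integral_fin_num (P : probability T R) F K :
  measurable_fun [set: T] F -> (forall x, 0 <= F x <= K) ->
  (\int[P]_x (F x)%:E)%E \is a fin_num.
Proof.
move=> mF F0K; have F0 x : (0%E <= (F x)%:E)%E by rewrite lee_fin; case/andP: (F0K x).
rewrite ge0_fin_numE ?integral_ge0 //; apply: (le_lt_trans (y := K%:E)); last exact: ltry.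
apply: le_trans (_ : \int[P]_x (cst K%:E x) <= _)%E.
  apply: ge0_le_integral => //; first exact/measurable_EFinP.
  by move=> x _; rewrite lee_fin; case/andP: (F0K x).
rewrite integral_cst // -[leRHS]mule1 lee_wpmul2l ?probability_le1 // lee_fin.
by case/andP: (F0K point) => /le_trans; apply.
Qed.

Lemma le_integral_off (mu : {measure set T -> \bar R}) F G (B : set T) (c K : R) :
  measurable B -> measurable_fun [set: T] F -> measurable_fun [set: T] G ->
  0 <= c -> (forall x, 0 <= F x <= K) -> (forall x, 0 <= G x) ->
  (forall x, ~ B x -> c * F x <= G x) ->
  (c%:E * \int[mu]_x (F x)%:E <= \int[mu]_x (G x)%:E + (c * K)%:E * mu B)%E.
Proof.
move=> mB mF mG c0 F0K G0 cFG.
have F0 x : 0 <= F x by case/andP: (F0K x).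
have cK0 : 0 <= c * K by rewrite mulr_ge0 // (le_trans (F0 point)); case/andP: (F0K point).
have mB1 : measurable_fun [set: T] (\1_B : T -> R) by exact: measurable_indic.
have -> : mu B = (\int[mu]_x (\1_B x)%:E)%E by rewrite integral_indic // setIT.
rewrite -!ge0_integralZl_EFin // -?ge0_integralD //; first last.
- exact/measurable_EFinP.
- by move=> x _; rewrite lee_fin.
- exact/measurable_EFinP.
- by apply: emeasurable_funM => //; exact/measurable_EFinP.
- by move=> x _; rewrite -EFinM lee_fin mulr_ge0.
- exact/measurable_EFinP.
- by move=> x _; rewrite lee_fin.
apply: ge0_le_integral => //.
- by move=> x _; rewrite -EFinM lee_fin mulr_ge0.
- by apply: emeasurable_funM => //; exact/measurable_EFinP.
- apply: emeasurable_funD; first exact/measurable_EFinP.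
  by apply: emeasurable_funM => //; exact/measurable_EFinP.
move=> x _; rewrite -EFinM -EFinD lee_fin indicE.
have [Bx|nBx] := pselect (B x).
  rewrite mem_set // mulr1 -[c * F x]add0r lerD ?G0 //.
  by rewrite ler_wpM2l //; case/andP: (F0K x).
by rewrite memNset // mulr0 addr0 cFG.
Qed.

End BoundedIntegral.

Lemma cvg_EFin_le (R : realType) (a : R ^nat) (l : R) (s : \bar R) :
  a @ \oo --> l -> (forall k, (a k)%:E <= s)%E -> (l%:E <= s)%E.
Proof.
move=> al a_le; have Eal : (EFin \o a) @ \oo --> l%:E by apply: cvg_EFin => //; exact: nearW.
by rewrite -(cvg_lim _ Eal) //; apply: lime_le; [exact: cvgP Eal | exact: nearW].
Qed.

Lemma threshold_swap (R : realType) (c a b x : R) : 0 < c < 1 -> 0 < a -> 0 < b -> 0 < x ->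
  ~ (c * (b / a) < x < b / a) -> (c * (b / a) < x) = ~~ (a / b < x^-1).
Proof.
move=> /andP[c0 c1] a0 b0 x0 not_tie.
rewrite -[a / b]invf_div ltf_pV2 ?posrE ?divr_gt0 //.
case: (ltP x (b / a)) => [xr|rx] /=.
  by apply/negbTE/negP => cx; apply: not_tie; rewrite cx xr.
by apply: lt_le_trans rx; rewrite gtr_pMl // divr_gt0.
Qed.

Definition shrink_seq (R : realType) (k : nat) : R := 1 - harmonic k.+1.

Section ShrinkSeq.
Variable R : realType.

Lemma shrink_seq_gt0 k : 0 < shrink_seq R k.
Proof. by rewrite /shrink_seq /= subr_gt0 invf_lt1 ?ltr1n. Qed.

Lemma shrink_seq_lt1 k : shrink_seq R k < 1.
Proof. by rewrite /shrink_seq gtrBl harmonic_gt0. Qed.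

Lemma shrink_seq_nondecreasing : nondecreasing_seq (shrink_seq R).
Proof.
by move=> a b ab; rewrite /shrink_seq /= lerD2l lerN2 lef_pV2 ?posrE // ler_nat !ltnS.
Qed.

Lemma shrink_seq_cvg : shrink_seq R @ \oo --> (1 : R).
Proof.
rewrite -[X in _ --> X]subr0; apply: cvgB; first exact: cvg_cst.
by have := @cvg_harmonic R; rewrite -cvg_shiftS.
Qed.

End ShrinkSeq.

Section Shrink.
Variables (R : realType) (n : nat).
Implicit Types (T : 'M[R]_(2, n)) (X : alloc n).

Definition shrink (c : R) T : 'M[R]_(2, n) :=
  \matrix_(i, j) (if i == 1 then c * T i j else T i j).

Lemma shrink_pos c T : 0 < c -> pos_mat T -> pos_mat (shrink c T).
Proof. by move=> c0 T_pos i j; rewrite mxE; case: ifP; rewrite ?mulr_gt0. Qed.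

Lemma makespan_shrink c X T : 0 <= c <= 1 -> (forall i j, 0 <= T i j) ->
  c * makespan X T <= makespan X (shrink c T).
Proof.
move=> /andP[c0 c1] T0; rewrite -makespanZ //; apply: le_makespan => i j.
by rewrite !mxE; case: ifP => // _; rewrite ler_piMl.
Qed.

Lemma opt_makespan_shrink c T : 0 <= c <= 1 -> (forall i j, 0 <= T i j) ->
  opt_makespan (shrink c T) <= opt_makespan T.
Proof.
move=> /andP[c0 c1] T0; apply: le_opt_makespan => i j.
by rewrite mxE; case: ifP => // _; rewrite ler_piMl.
Qed.

Lemma makespan_xrow (i1 i2 : 'I_2) X T :
  makespan [ffun j => tperm i1 i2 (X j)] (xrow i1 i2 T) = makespan X T.
Proof. by rewrite -[RHS](makespan_row_perm (tperm i1 i2)) tpermV. Qed.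

End Shrink.

Section InversionBound.
Variables (R : realType) (n : nat) (P : probability (n.-tuple R) R) (U : 'M[R]_(2, n)).
Hypotheses (n_gt0 : (0 < n)%N) (P_pos : supported_pos P) (U_pos : pos_mat U).

Let r j := U 1 j / U ord0 j.

(* Non-positive thresholds are included: inversion does not reverse the order
   there (and 0^-1 = 0); they form a P-null set. *)
Definition tie_zone (c : R) : set (n.-tuple R) :=
  [set z | exists j, tnth z j <= 0 \/ c * r j < tnth z j < r j].

Lemma alg_alloc_swap_shrink c z : 0 < c < 1 -> ~ tie_zone c z ->
  alg_alloc z (xrow 0 1 (shrink c U)) =
  [ffun j => tperm 0 1 (alg_alloc (sinv_act Sinv_inv z) U j)].
Proof.
move=> c01 z_off; apply/ffunP => j; rewrite !ffunE !mxE tpermL tpermR /= tnth_mktuple.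
have z_gt0 : 0 < tnth z j by rewrite ltNge; apply/negP => ?; apply: z_off; exists j; left.
have z_off_j : ~ (c * r j < tnth z j < r j) by move=> ?; apply: z_off; exists j; right.
rewrite -mulrA (threshold_swap c01 (U_pos ord0 j) (U_pos 1 j) z_gt0 z_off_j).
by case: (_ < _) => /=; rewrite ?tpermL ?tpermR.
Qed.

Lemma measurable_tie_zone c : measurable (tie_zone c).
Proof.
rewrite (_ : tie_zone c = \bigcup_(j in [set: 'I_n])
    ((fun z => tnth z j) @^-1` (`]-oo, 0] `|` `]c * r j, r j[))).
  apply: fin_bigcup_measurable => // j _; rewrite -[X in measurable X]setTI.
  by apply: measurable_tnth => //; apply: measurableU; exact: measurable_itv.
apply/seteqP; split=> z [j] /=; rewrite ?in_itv /=; first by exists j.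
by move=> _; exists j.
Qed.

Lemma tie_zone_nonincreasing : nonincreasing_seq (fun k => tie_zone (shrink_seq R k)).
Proof.
move=> a b ab; apply/subsetPset => z [j [z_le0|/andP[cz zr]]]; exists j; first by left.
by right; rewrite zr (le_lt_trans _ cz) // ler_wpM2r ?shrink_seq_nondecreasing // divr_ge0 ?ltW.
Qed.

Lemma bigcap_tie_zone :
  \bigcap_k tie_zone (shrink_seq R k) `<=` ~` [set z | forall j, 0 < tnth z j].
Proof.
move=> z z_tie z_pos.
have /fin_all_exists [k k_off] :
    forall j, exists kj, ~ (shrink_seq R kj * r j < tnth z j < r j).
  move=> j; have r0 : 0 < r j by rewrite divr_gt0.
  have [rz|zr] := leP (r j) (tnth z j); first by exists 0%N => /andP[].
  have /cvgr_gt /(_ (tnth z j / r j)) : shrink_seq R @ \oo --> (1 : R) := @shrink_seq_cvg R.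
  rewrite ltr_pdivrMr // mul1r => /(_ zr) /filter_ex [k zc]; exists k => /andP[+ _].
  by rewrite -ltr_pdivlMr // ltNge ltW.
have [j [|/andP[cz zr]]] := z_tie (\max_j k j) I; first by rewrite leNgt z_pos.
have r0 : 0 <= r j by rewrite divr_ge0 // ltW.
apply: (k_off j); rewrite zr andbT (le_lt_trans _ cz) // ler_wpM2r //.
by apply: shrink_seq_nondecreasing; exact: leq_bigmax.
Qed.

Lemma tie_zone_cvg0 : (fun k => P (tie_zone (shrink_seq R k))) @ \oo --> 0%E.
Proof.
have mpos := @measurable_pos_tuples R n.
have mB k : measurable (tie_zone (shrink_seq R k)) by exact: measurable_tie_zone.
have mcap : measurable (\bigcap_k tie_zone (shrink_seq R k)) by exact: bigcapT_measurable.
have P_cap : P (\bigcap_k tie_zone (shrink_seq R k)) = 0%E.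
  apply: subset_measure0 bigcap_tie_zone _ => //; first exact: measurableC.
  by have := probability_setC P mpos; rewrite P_pos subee.
rewrite -P_cap; apply: nonincreasing_cvg_mu => //; last exact: tie_zone_nonincreasing.
exact: le_lt_trans (probability_le1 P (mB 0%N)) (ltry _).
Qed.

Let F z := makespan (alg_alloc (sinv_act Sinv_inv z) U) U.
Let K := \sum_i \sum_j U i j.

Let U_ge0 i j : 0 <= U i j. Proof. exact/ltW. Qed.

Let F_bounded z : 0 <= F z <= K.
Proof. by rewrite makespan_ge0 makespan_le_sum. Qed.

Let measurable_F : measurable_fun [set: n.-tuple R] F.
Proof. exact: measurableT_comp (measurable_makespan_alg U) (measurable_sinv_act Sinv_inv). Qed.

Lemma ratio_swap_shrink_ge c : 0 < c < 1 ->
  (((c * (fine (\int[P]_z (F z)%:E) - K * fine (P (tie_zone c))))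
     / opt_makespan U)%:E <= Defs.ratio P (xrow 0 1 (shrink c U))%R)%E.
Proof.
move=> c01; have /andP[c0 c1] := c01.
set S := xrow 0 1 (shrink c U); set G := fun z => makespan (alg_alloc z S) S.
have S_pos : pos_mat S by move=> i j; rewrite mxE; exact: shrink_pos.
have G_bounded z : 0 <= G z <= \sum_i \sum_j S i j.
  by rewrite makespan_ge0 makespan_le_sum // => i j; exact/ltW.
have mG : measurable_fun [set: n.-tuple R] G by exact: measurable_makespan_alg.
have cFG z : ~ tie_zone c z -> c * F z <= G z.
  move=> z_off; rewrite /G alg_alloc_swap_shrink // makespan_xrow.
  by apply: makespan_shrink; rewrite ?(ltW c0) ?(ltW c1).
have key := le_integral_off P (measurable_tie_zone c) measurable_F mG (ltW c0)
  F_bounded (fun z => proj1 (andP (G_bounded z))) cFG.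
have IFE := fineK (bounded_integral_fin_num P measurable_F F_bounded).
have IGE := fineK (bounded_integral_fin_num P mG G_bounded).
have pE : (P : {measure set _ -> \bar R}) (tie_zone c) = (fine (P (tie_zone c)))%:E.
  by rewrite fineK // fin_num_measure //; exact: measurable_tie_zone.
rewrite -IFE -IGE pE -!EFinM -EFinD lee_fin in key.
rewrite /Defs.ratio /exp_makespan -/G -IGE -EFinM lee_fin.
set IF := fine _ in key *; set IG := fine _ in key *; set p := fine _ in key *.
have IG0 : 0 <= IG by rewrite fine_ge0 // integral_ge0 // => z _; rewrite lee_fin makespan_ge0.
have oU0 := opt_makespan_gt0 n_gt0 U_pos.
have oSU : opt_makespan S <= opt_makespan U.
  by rewrite opt_makespan_row_perm opt_makespan_shrink // (ltW c0) (ltW c1).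
apply: le_trans (_ : IG / opt_makespan U <= _).
  by rewrite ler_pM2r ?invr_gt0 // mulrBr mulrA lerBlDr.
by rewrite ler_wpM2l // lef_pV2 ?posrE // opt_makespan_gt0.
Qed.

Lemma sinv_ratio_inv_le_worst_ratio : (sinv_ratio P Sinv_inv U <= worst_ratio P)%E.
Proof.
pose c := @shrink_seq R.
pose p k := fine (P (tie_zone (c k))).
have IFE := fineK (bounded_integral_fin_num P measurable_F F_bounded).
set IF := fine _ in IFE; rewrite /sinv_ratio -/F -IFE -EFinM.
apply: (@cvg_EFin_le _ (fun k => c k * (IF - K * p k) / opt_makespan U)).
  have /fine_cvgP[_ p_cvg] := tie_zone_cvg0.
  have -> : IF / opt_makespan U = 1 * (IF - K * 0) / opt_makespan U.
    by rewrite mul1r mulr0 subr0.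
  apply: cvgM; last exact: cvg_cst.
  apply: cvgM; first exact: shrink_seq_cvg.
  by apply: cvgB; [exact: cvg_cst | apply: cvgM; [exact: cvg_cst | exact: p_cvg]].
move=> k; apply: le_trans (ratio_swap_shrink_ge _) _.
  by rewrite shrink_seq_gt0 shrink_seq_lt1.
apply: ereal_sup_ubound; exists (xrow 0 1 (shrink (c k) U)) => //.
by move=> i j; rewrite mxE; apply: shrink_pos; rewrite ?shrink_seq_gt0.
Qed.

End InversionBound.

Lemma worst_ratio_inv_le (R : realType) (n : nat) (P Q : probability (n.-tuple R) R)
    (pi : 'S_n) :
  (0 < n)%N -> supported_pos P -> is_transform_dist P Q Sinv_inv pi ->
  (worst_ratio Q <= worst_ratio P)%E.
Proof.
move=> n_gt0 P_pos hQ; rewrite (worst_ratio_transform hQ).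
by apply: ge_ereal_sup => _ [U U_pos <-]; exact: sinv_ratio_inv_le_worst_ratio.
Qed.

Theorem theorem3 (R : realType) (n : nat) (hn : (0 < n)%N)
  (P : probability (n.-tuple R) R) (hP : supported_pos P)
  (g : Sinv) (pi : 'S_n) (Q : probability (n.-tuple R) R)
  (hQ : is_transform_dist P Q g pi) :
  worst_ratio P = worst_ratio Q.
Proof.
case: g hQ => hQ; first by rewrite (worst_ratio_transform hQ).
apply/le_anti/andP; split; last exact: worst_ratio_inv_le hn hP hQ.
exact: worst_ratio_inv_le hn (supported_pos_transform hP hQ) (is_transform_dist_sym hQ).
Qed.
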